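(* In the category $\mathsf{Top}$ of topological spaces and continuous maps, a space is (1) finitely generated with respect to embeddings if, and only if, it is finite; and (2) finitely generated with respect to open embeddings if, and only if, it is compact.
   Context: An embedding is an injective continuous map $m:X\to Y$ such that $X$ carries the initial topology (every open set of $X$ is $m^{-1}(U)$ for some open $U\subseteq Y$); an open embedding is an embedding with open image. For a class $\mathcal{M}$ of monomorphisms in a category $\mathcal{C}$, an object $X$ is finitely generated w.r.t. $\mathcal{M}$ if for every directed diagram $(Z_i)_{i\in I}$ (indexed by a directed poset $I$, i.e. every finite subset has an upper bound) whose connecting morphisms $z_{i,j}:Z_i\to Z_j$ lie in $\mathcal{M}$, with colimit cocone $c_i:Z_i\to Z$ in $\mathcal{C}$, every morphism $f:X\to Z$ factorizes essentially uniquely through some $c_i$: (i) there are $i\in I$ and $g:X\to Z_i$ with $f=c_i\cdot g$, and (ii) if also $g':X\to Z_i$ satisfies $f=c_i\cdot g'$, then some connecting morphism $z_{i,j}$ satisfies $z_{i,j}\cdot g=z_{i,j}\cdot g'$. *)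

From HB Require Import structures.
From mathcomp Require Import all_boot all_order.
From mathcomp Require Import all_classical all_reals all_analysis.
Import Order.TTheory.
Set Implicit Arguments.
Unset Strict Implicit.
Local Open Scope classical_set_scope.
Local Open Scope order_scope.

Definition embedding (X Y : topologicalType) (m : X -> Y) : Prop :=
  [/\ injective m, continuous m &
      forall A : set X, open A -> exists U : set Y, open U /\ A = m @^-1` U].

Definition open_embedding (X Y : topologicalType) (m : X -> Y) : Prop :=
  embedding m /\ open (range m).

(* a directed poset: every finite subset (in particular the empty one) has an
   upper bound, i.e. nonempty and any two elements have a common upper bound *)
Definition directed (d : Order.disp_t) (I : porderType d) : Prop :=
  (exists i : I, True) /\ forall i j : I, exists k, i <= k /\ j <= k.

(* a functor from the poset I (as a category) to Top *)
Definition diagram (d : Order.disp_t) (I : porderType d)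
  (Z : I -> topologicalType) (z : forall i j : I, i <= j -> Z i -> Z j) : Prop :=
  [/\ forall i j (h : i <= j), continuous (z i j h),
      forall i (h : i <= i), z i i h = id &
      forall i j k (hij : i <= j) (hjk : j <= k) (hik : i <= k),
        z i k hik = z j k hjk \o z i j hij].

Definition diagram_in (M : forall X Y : topologicalType, (X -> Y) -> Prop)
  (d : Order.disp_t) (I : porderType d)
  (Z : I -> topologicalType) (z : forall i j : I, i <= j -> Z i -> Z j) : Prop :=
  forall i j (h : i <= j), M (Z i) (Z j) (z i j h).

Definition is_colimit (d : Order.disp_t) (I : porderType d)
  (Z : I -> topologicalType) (z : forall i j : I, i <= j -> Z i -> Z j)
  (Zc : topologicalType) (c : forall i, Z i -> Zc) : Prop :=
  [/\ forall i, continuous (c i),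
      forall i j (h : i <= j), c j \o z i j h = c i &
      forall (W : topologicalType) (g : forall i, Z i -> W),
        (forall i, continuous (g i)) ->
        (forall i j (h : i <= j), g j \o z i j h = g i) ->
        exists h : Zc -> W,
          [/\ continuous h, (forall i, h \o c i = g i) &
              forall h' : Zc -> W, continuous h' ->
                (forall i, h' \o c i = g i) -> h' = h]].

Definition finitely_generated (M : forall X Y : topologicalType, (X -> Y) -> Prop)
  (X : topologicalType) : Prop :=
  forall (d : Order.disp_t) (I : porderType d)
    (Z : I -> topologicalType) (z : forall i j : I, i <= j -> Z i -> Z j)
    (Zc : topologicalType) (c : forall i, Z i -> Zc),
    directed I -> diagram z -> diagram_in M z -> is_colimit z c ->
    forall f : X -> Zc, continuous f ->
      (exists i (g : X -> Z i), continuous g /\ f = c i \o g) /\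
      (forall i (g g' : X -> Z i), continuous g -> continuous g' ->
         f = c i \o g -> f = c i \o g' ->
         exists j (h : i <= j), z i j h \o g = z i j h \o g').

From HB Require Import structures.
From mathcomp Require Import all_boot all_order finmap.
From mathcomp Require Import all_classical all_reals all_analysis.
Local Open Scope classical_set_scope.
Local Open Scope order_scope.
Import Order.TTheory.

(* A directed colimit in Top is the colimit of the underlying sets with the
   final topology, as one sees by mapping it into the indiscrete two-point space
   and into the Sierpinski space.  If the connecting maps are embeddings, so are
   the colimit injections [c i], so a continuous [f : X -> colim] factors
   through some [c i] exactly when its image lies in the range of [c i]; these
   ranges increase and cover the colimit, and they are open when the connecting
   maps are open embeddings.  A finite image, resp. a compact image covered by
   open ranges, therefore lies in a single range.  Conversely, the indiscrete
   space on [X] is the directed union of its finite subspaces, and [X] is the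
   directed union of the finite unions of the members of an open cover; letting
   the identity of [X] factor through one member of such a union shows that [X]
   is finite, resp. that the cover has a finite subcover. *)

(* [compact_cover] is stated for pointed spaces; a point of a nonempty [A]
   makes [T] pointed. *)
Lemma compactP (T : topologicalType) (A : set T) : compact A <-> cover_compact A.
Proof.
have [->|/set0P [a _]] := eqVneq A set0.
  by split=> [_ I D f _ _|_]; [exists fset0 | exact: compact0].
pose pT := HB.pack_for ptopologicalType T (isPointed.Build T a).
by change (@compact pT A <-> @cover_compact pT A); rewrite compact_cover.
Qed.

Lemma open_of_nbhs_subset (T : topologicalType) (A : set T) :
  (forall x, A x -> exists2 B, open_nbhs x B & B `<=` A) -> open A.
Proof.
move=> nbhsA; rewrite openE => x /nbhsA [B xB BA].
exact: filterS BA (open_nbhs_nbhs xB).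
Qed.

Lemma set_val_open_trace {T : topologicalType} {A O : set T} :
  open (@set_val T A @^-1` O) -> exists2 B, open B & A `&` B = A `&` O.
Proof.
move=> [B Bopen BO]; exists B => //.
have BOE x (Ax : A x) : B x <-> O x.
  by have /= -> := congr1 (@^~ (SigSub (mem_set Ax))) BO.
by apply/seteqP; split=> x [Ax /(BOE x Ax) ?].
Qed.

Lemma open_of_open_cover {T : topologicalType} {J : Type} {U : J -> set T} :
  (forall j, open (U j)) -> (forall x, exists j, U j x) ->
  forall O, (forall j, open (@set_val T (U j) @^-1` O)) -> open O.
Proof.
move=> Uopen Ucover O Oopen.
have -> : O = \bigcup_j (U j `&` O).
  apply/seteqP; split=> [x Ox|x [j _ []//]].
  by have [j Ujx] := Ucover x; exists j.
apply: bigcup_open => j _; have [B Bopen <-] := set_val_open_trace (Oopen j).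
exact: openI.
Qed.

Lemma embedding_factor {X Y Z : topologicalType} {m : Y -> Z} {f : X -> Z} :
  embedding m -> continuous f -> range f `<=` range m ->
  exists g : X -> Y, continuous g /\ f = m \o g.
Proof.
move=> [_ _ m_initial] fcont fm.
have /choice [g fg] : forall x, exists y, m y = f x.
  by move=> x; have [y _ <-] := fm (f x) (imageT f x); exists y.
exists g; split; last by apply/funext => x; rewrite /= fg.
apply/continuousP => V /m_initial [U [Uopen ->]].
have -> : g @^-1` (m @^-1` U) = f @^-1` U by apply/seteqP; split=> x /=; rewrite fg.
by move/continuousP: fcont; apply.
Qed.

Definition indiscrete (T : Type) : Type := T.

Section Indiscrete.
Variable T : choiceType.

Definition indiscrete_open (A : set (indiscrete T)) := forall x y, A x -> A y.

Let indiscrete_openT : indiscrete_open setT. Proof. by []. Qed.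

Let indiscrete_openI : setI_closed indiscrete_open.
Proof. by move=> A B Aopen Bopen x y [/Aopen Ay /Bopen By]. Qed.

Let indiscrete_open_bigU (J : Type) (F : J -> set (indiscrete T)) :
  (forall j, indiscrete_open (F j)) -> indiscrete_open (\bigcup_j F j).
Proof. by move=> Fopen x y [j _ /Fopen Fjy]; exists j. Qed.

HB.instance Definition _ := Choice.on (indiscrete T).
HB.instance Definition _ := isOpenTopological.Build (indiscrete T)
  indiscrete_openT indiscrete_openI indiscrete_open_bigU.

End Indiscrete.

Lemma continuous_indiscrete {T : choiceType} {X : topologicalType}
  (g : X -> indiscrete T) : continuous g.
Proof.
apply/continuousP => A Aopen.
have [[y Ay]|A0] := pselect (exists y, A y).
  suff -> : g @^-1` A = setT by exact: openT.
  by apply/seteqP; split=> // x _; exact: Aopen Ay.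
suff -> : g @^-1` A = set0 by exact: open0.
by apply/seteqP; split=> // x Agx; apply: A0; exists (g x).
Qed.

Definition sierpinski : Type := bool.

Section Sierpinski.

Definition sierpinski_open (A : set sierpinski) := A false -> A true.

Let sierpinski_openT : sierpinski_open setT. Proof. by []. Qed.

Let sierpinski_openI : setI_closed sierpinski_open.
Proof. by move=> A B Aopen Bopen [/Aopen At /Bopen Bt]. Qed.

Let sierpinski_open_bigU (J : Type) (F : J -> set sierpinski) :
  (forall j, sierpinski_open (F j)) -> sierpinski_open (\bigcup_j F j).
Proof. by move=> Fopen [j _ /Fopen Fjt]; exists j. Qed.

HB.instance Definition _ := Choice.on sierpinski.
HB.instance Definition _ := isOpenTopological.Build sierpinski
  sierpinski_openT sierpinski_openI sierpinski_open_bigU.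

Lemma open_sierpinski_true : open [set true : sierpinski].
Proof. by []. Qed.

Lemma continuous_sierpinski (X : topologicalType) (g : X -> sierpinski) :
  open [set x | g x] -> continuous g.
Proof.
move=> gopen; apply/continuousP => A Aopen.
have [Af|Anf] := pselect (A false).
  suff -> : g @^-1` A = setT by exact: openT.
  by apply/seteqP; split=> // x _ /=; case: (g x); [exact: Aopen|].
have [At|Ant] := pselect (A true).
  suff -> : g @^-1` A = [set x | g x] by [].
  by apply/seteqP; split=> x /=; case: (g x).
suff -> : g @^-1` A = set0 by exact: open0.
by apply/seteqP; split=> // x /=; case: (g x).
Qed.

End Sierpinski.

Section Directed.
Context {d : Order.disp_t} {I : porderType d}.
Hypothesis dirI : directed I.

Lemma finite_sub_directed_cover {T : choiceType} {U : I -> set T} {A : set T} :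
  (forall i j, i <= j -> U i `<=` U j) -> finite_set A ->
  A `<=` \bigcup_i U i -> exists i, A `<=` U i.
Proof.
move=> Umono /finite_fsetP [B ->] BU.
suff [i Bi] : exists i, forall x, x \in (B : seq T) -> U i x by exists i.
have : forall x, x \in (B : seq T) -> exists i, U i x.
  by move=> x /BU [i _ Uix]; exists i.
elim: (B : seq T) => [_|x s IHs sU]; first by have [[i _] _] := dirI; exists i.
have [i si] := IHs (fun y ys => sU y (mem_behead (s := x :: s) ys)).
have [k Ukx] := sU x (mem_head x s).
have [j [ij kj]] := dirI.2 i k.
exists j => y; rewrite inE => /predU1P [->|ys]; first exact: Umono kj _ Ukx.
exact: Umono ij _ (si y ys).
Qed.

Lemma compact_sub_directed_cover {T : topologicalType} {U : I -> set T} {A : set T} :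
  (forall i j, i <= j -> U i `<=` U j) -> (forall i, open (U i)) -> compact A ->
  A `<=` \bigcup_i U i -> exists i, A `<=` U i.
Proof.
move=> Umono Uopen /compactP Acpt AU.
have [D _ AD] := Acpt I setT U (fun i _ => Uopen i) AU.
have [k Dk] : exists k, [set` D] `<=` [set i | i <= k].
  apply: (@finite_sub_directed_cover _ (fun k => [set i | i <= k])) (finite_fset D) _.
    by move=> i j ij l li; exact: le_trans li ij.
  by move=> i _; exists i => //; rewrite /= lexx.
by exists k => x /AD [i /Dk ik Uix]; exact: Umono ik _ Uix.
Qed.

End Directed.

Section DirectedColimit.
Context {d : Order.disp_t} {I : porderType d} {Z : I -> topologicalType}
  {z : forall i j : I, i <= j -> Z i -> Z j} {Zc : topologicalType}
  {c : forall i, Z i -> Zc}.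
Hypotheses (dirI : directed I) (diag : diagram z) (col : is_colimit z c).

Lemma diagram_continuous {i j} (h : i <= j) : continuous (z i j h).
Proof. by case: diag. Qed.

Lemma diagram_id {i} (h : i <= i) : z i i h = id.
Proof. by case: diag. Qed.

Lemma diagram_comp {i j k} (hij : i <= j) (hjk : j <= k) (hik : i <= k) x :
  z j k hjk (z i j hij x) = z i k hik x.
Proof. by case: diag => _ _ zcomp; rewrite (zcomp _ _ _ hij hjk hik). Qed.

Lemma cocone_continuous i : continuous (c i).
Proof. by case: col. Qed.

Lemma cocone_comp {i j} (h : i <= j) x : c j (z i j h x) = c i x.
Proof. by case: col => _ cz _; rewrite -(cz _ _ h). Qed.

Lemma le_cocone_range i j : i <= j -> range (c i) `<=` range (c j).
Proof. by move=> ij _ [x _ <-]; exists (z i j ij x); rewrite ?cocone_comp. Qed.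

Lemma cocone_range_cover : [set: Zc] `<=` \bigcup_i range (c i).
Proof.
case: col => _ _ univ p _.
have [h [_ _ huniq]] := univ (indiscrete bool) (fun _ _ => true)
  (fun i => continuous_indiscrete _) (fun _ _ _ => erefl).
have inrangeE : (fun q => `[< (\bigcup_i range (c i)) q >]) = h.
  apply: huniq (continuous_indiscrete _) _ => i; apply/funext => x /=.
  by apply/asboolP; exists i => //; exists x.
have trueE : (fun _ => true) = h := huniq _ (continuous_indiscrete _) (fun _ => erefl).
by apply/asboolP; have /(congr1 (@^~ p)) /= -> := etrans inrangeE (esym trueE).
Qed.

Definition compatible (P : forall i, set (Z i)) :=
  forall i j (h : i <= j) x, P j (z i j h x) <-> P i x.

Lemma cocone_compatible (P : forall i, set (Z i)) {i j} {x : Z i} {y : Z j} :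
  compatible P -> c i x = c j y -> P i x -> P j y.
Proof.
move=> Pcomp cxy Pix; case: col => _ _ univ.
pose g k (w : Z k) : indiscrete bool := `[< P k w >].
have gcomp k l (kl : k <= l) : g l \o z k l kl = g k.
  by apply/funext => w; apply: asbool_equiv_eq; exact: Pcomp.
have [h [_ hc _]] := univ _ g (fun k => continuous_indiscrete _) gcomp.
have hcE k w : h (c k w) = g k w := congr1 (@^~ w) (hc k).
have : g j y by rewrite -hcE -cxy hcE; exact/asboolP.
by move/asboolP.
Qed.

Lemma cocone_eq i j x y : c i x = c j y ->
  exists k (hi : i <= k) (hj : j <= k), z i k hi x = z j k hj y.
Proof.
move=> cxy.
pose P l (w : Z l) := exists k (hl : l <= k) (hj : j <= k), z l k hl w = z j k hj y.
apply: (@cocone_compatible P j i y x _ (esym cxy)); last first.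
  by exists j, (lexx j), (lexx j).
move=> l l' ll' w; rewrite /P; split.
  move=> [k [l'k [jk e]]]; exists k, (le_trans ll' l'k), jk.
  by rewrite -e (diagram_comp ll' l'k (le_trans ll' l'k)).
move=> [k [lk [jk e]]]; have [m [km l'm]] := dirI.2 k l'.
exists m, l'm, (le_trans jk km).
rewrite (diagram_comp _ _ (le_trans lk km)) -(diagram_comp lk km) e.
exact: diagram_comp.
Qed.

Lemma colimit_open (U : set Zc) : (forall i, open (c i @^-1` U)) -> open U.
Proof.
move=> Uopen; case: col => _ _ univ.
pose g i (x : Z i) : sierpinski := `[< U (c i x) >].
have gcont i : continuous (g i).
  apply: continuous_sierpinski.
  rewrite (_ : [set x | g i x] = c i @^-1` U) ?Uopen //.
  by apply/seteqP; split=> x /asboolP.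
have gcomp i j (h : i <= j) : g j \o z i j h = g i.
  by apply/funext => x; rewrite /g /= cocone_comp.
have [h [hcont hc _]] := univ sierpinski g gcont gcomp.
have hcE i x : h (c i x) = g i x := congr1 (@^~ x) (hc i).
suff -> : U = h @^-1` [set true].
  by move/continuousP: hcont; apply; exact: open_sierpinski_true.
apply/seteqP; split=> p; have /cocone_range_cover [i _ [x _ <-]] : [set: Zc] p by [].
  by rewrite /= hcE => Ucx; apply/asboolP.
by rewrite /= hcE => /asboolP.
Qed.

Lemma colimit_open_compatible (P : forall i, set (Z i)) :
  compatible P -> (forall i, open (P i)) ->
  exists U, open U /\ forall i, c i @^-1` U = P i.
Proof.
move=> Pcomp Popen; exists (\bigcup_i c i @` P i).
suff cP i : c i @^-1` (\bigcup_i c i @` P i) = P i.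
  by split=> //; apply: colimit_open => i; rewrite cP.
apply/seteqP; split=> [x [j _ [y Pjy cyx]]|x Pix]; last by exists i => //; exists x.
exact: cocone_compatible Pcomp cyx Pjy.
Qed.

Lemma cocone_open_range : diagram_in open_embedding z -> forall k, open (range (c k)).
Proof.
move=> zopen k; apply: colimit_open => j; apply: open_of_nbhs_subset => x /= [y _].
move=> /cocone_eq [m [km [jm e]]].
exists (z j m jm @^-1` range (z k m km)).
  split; last by exists y.
  by move/continuousP: (diagram_continuous jm); apply; case: (zopen k m km).
move=> x' /= [y' _ e']; exists y' => //.
by rewrite -(cocone_comp km) e' cocone_comp.
Qed.

Section Embeddings.
Hypothesis zemb : diagram_in embedding z.

Lemma cocone_inj i : injective (c i).
Proof.
move=> x y /cocone_eq [k [ik [ik' e]]]; have [zinj _ _] := zemb _ _ ik.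
by apply: zinj; rewrite e (bool_irrelevance ik ik').
Qed.

Lemma cocone_initial i (V : set (Z i)) : open V -> exists U, open U /\ V = c i @^-1` U.
Proof.
move=> Vopen.
pose P k (x : Z k) := exists m (im : i <= m) (km : k <= m) (Q : set (Z m)),
  [/\ open Q, V = z i m im @^-1` Q & Q (z k m km x)].
have Popen k : open (P k).
  apply: open_of_nbhs_subset => x [m [im [km [Q [Qopen VQ Qx]]]]].
  exists (z k m km @^-1` Q); last by move=> x' Qx'; exists m, im, km, Q.
  by split=> //; move/continuousP: (diagram_continuous km); apply.
have Pcomp : compatible P.
  move=> k l kl x; rewrite /P; split.
    move=> [m [im [lm [Q [Qopen VQ Qx]]]]]; exists m, im, (le_trans kl lm), Q.
    by rewrite -(diagram_comp kl lm).
  move=> [m [im [km [Q [Qopen VQ Qx]]]]]; have [n [mn ln]] := dirI.2 m l.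
  have [_ _ /(_ Q Qopen) [Q' [Q'open QQ']]] := zemb _ _ mn.
  exists n, (le_trans im mn), ln, Q'; split=> //.
    rewrite VQ QQ'; apply/seteqP.
    by split=> x' /=; rewrite (diagram_comp im mn (le_trans im mn)).
  rewrite (diagram_comp kl ln (le_trans km mn)) -(diagram_comp km mn).
  by rewrite QQ' in Qx.
have [U [Uopen cU]] := colimit_open_compatible _ Pcomp Popen.
exists U; split=> //; rewrite cU; apply/seteqP; split=> x.
  by move=> Vx; exists i, (lexx i), (lexx i), V; rewrite !diagram_id.
move=> [m [im [im' [Q [_ -> Qx]]]]].
by rewrite /= (bool_irrelevance im im').
Qed.

Lemma cocone_embedding i : embedding (c i).
Proof.
by split; [exact: cocone_inj | exact: cocone_continuous | exact: cocone_initial].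
Qed.

End Embeddings.

End DirectedColimit.

Lemma finitely_generated_of_range (M : forall X Y : topologicalType, (X -> Y) -> Prop)
    (X : topologicalType) :
  (forall (Y Y' : topologicalType) (m : Y -> Y'), M Y Y' m -> embedding m) ->
  (forall d (I : porderType d) (Z : I -> topologicalType)
      (z : forall i j : I, i <= j -> Z i -> Z j) (Zc : topologicalType)
      (c : forall i, Z i -> Zc),
    directed I -> diagram z -> diagram_in M z -> is_colimit z c ->
    forall f : X -> Zc, continuous f -> exists i, range f `<=` range (c i)) ->
  finitely_generated M X.
Proof.
move=> Memb Mrange d I Z z Zc c dirI diag zM col f fcont.
have zemb : diagram_in embedding z by move=> i j h; exact: Memb (zM i j h).
split.
  have [i fi] := Mrange d I Z z Zc c dirI diag zM col f fcont.
  have cemb := cocone_embedding dirI diag col zemb i.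
  have [g [gcont ->]] := embedding_factor cemb fcont fi.
  by exists i, g.
move=> i g g' _ _ fg fg'; exists i, (lexx i).
suff -> : g = g' by [].
have [cinj _ _] := cocone_embedding dirI diag col zemb i.
apply/funext => x; apply: cinj.
by move: (congr1 (@^~ x) fg) (congr1 (@^~ x) fg') => /= <- <-.
Qed.

Lemma finite_finitely_generated (X : topologicalType) :
  finite_set [set: X] -> finitely_generated embedding X.
Proof.
move=> Xfin; apply: finitely_generated_of_range => [//|d I Z z Zc c dirI diag _ col f _].
apply: (finite_sub_directed_cover dirI (le_cocone_range col) (finite_image f Xfin)).
exact: subset_trans (cocone_range_cover col).
Qed.

Lemma compact_finitely_generated (X : topologicalType) :
  compact [set: X] -> finitely_generated open_embedding X.
Proof.
move=> Xcpt; apply: finitely_generated_of_range => [Y Y' m []//|].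
move=> d I Z z Zc c dirI diag zopen col f fcont.
apply: (compact_sub_directed_cover dirI (le_cocone_range col)
  (cocone_open_range dirI diag col zopen)).
  exact: continuous_compact (continuous_subspaceT fcont) Xcpt.
exact: subset_trans (cocone_range_cover col).
Qed.

Section SubspaceUnion.
Context {Y : topologicalType} {d : Order.disp_t} {J : porderType d} {U : J -> set Y}.
Hypotheses (dirJ : directed J) (Umono : forall i j, i <= j -> U i `<=` U j)
  (Ucover : forall y, exists j, U j y)
  (Ufinal : forall O, (forall j, open (@set_val Y (U j) @^-1` O)) -> open O).

Definition union_piece (j : J) : topologicalType := set_type (U j).

Definition piece_incl (i j : J) (ij : i <= j) (x : union_piece i) : union_piece j :=
  SigSub (mem_set (Umono _ _ ij _ (set_mem (valP x)))).

Lemma continuous_piece_incl i j (ij : i <= j) : continuous (piece_incl _ _ ij).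
Proof. by apply/continuousP => _ [B Bopen <-]; exists B. Qed.

Lemma piece_incl_diagram : diagram piece_incl.
Proof.
split; first exact: continuous_piece_incl.
  by move=> i ii; apply/funext => x; apply: val_inj.
by move=> i j k ij jk ik; apply/funext => x; apply: val_inj.
Qed.

Lemma piece_incl_embedding : diagram_in embedding piece_incl.
Proof.
move=> i j ij; split; [|exact: continuous_piece_incl|].
  by move=> x y /(congr1 set_val) xy; apply: val_inj.
by move=> _ [B Bopen <-]; exists (set_val @^-1` B); split=> //; exists B.
Qed.

Lemma piece_incl_open_embedding :
  (forall j, open (U j)) -> diagram_in open_embedding piece_incl.
Proof.
move=> Uopen i j ij; split; first exact: piece_incl_embedding.
suff -> : range (piece_incl _ _ ij) = set_val @^-1` U i by exists (U i).
apply/seteqP; split=> [_ [x _ <-]|y Uiy]; first exact: set_mem (valP x).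
by exists (SigSub (mem_set (Uiy : U i (set_val y)))) => //; apply: val_inj.
Qed.

Lemma piece_incl_colimit :
  is_colimit piece_incl (fun j => @set_val Y (U j) : union_piece j -> Y).
Proof.
split=> [j|//|W g gcont gcomp]; first exact: initial_continuous.
have gE i j (x : union_piece i) (y : union_piece j) :
    set_val x = set_val y -> g i x = g j y.
  move=> xy; have [k [ik jk]] := dirJ.2 i j.
  by rewrite -(gcomp i k ik) -(gcomp j k jk) /=; congr (g k _); apply: val_inj.
have /choice [piece Upiece] := Ucover.
pose h y := g (piece y) (SigSub (mem_set (Upiece y))).
have hc i : h \o set_val = g i by apply/funext => x /=; exact: gE.
exists h; split=> // [|h' _ h'c].
  apply/continuousP => O Oopen; apply: Ufinal => j; rewrite -comp_preimage hc.
  by move/continuousP: (gcont j); apply.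
by apply/funext => y; rewrite /h -(h'c (piece y)).
Qed.

Lemma finitely_generated_sub_union {M : forall X Y : topologicalType, (X -> Y) -> Prop}
    {X : topologicalType} {f : X -> Y} :
  finitely_generated M X -> diagram_in M piece_incl -> continuous f ->
  exists j, range f `<=` U j.
Proof.
move=> Xfg inclM fcont.
have [[j [g [_ fg]]] _] :=
  Xfg _ _ _ _ _ _ dirJ piece_incl_diagram inclM piece_incl_colimit f fcont.
by exists j => _ [x _ <-]; rewrite fg; exact: set_mem (valP (g x)).
Qed.

End SubspaceUnion.

Definition fin_subset (T : choiceType) : Type := {fset T}.

Section FinSubset.
Variable T : choiceType.

Let fin_subset_le_anti : antisymmetric (fun A B : fin_subset T => fsubset A B).
Proof. by move=> A B /andP [AB BA]; apply/eqP; rewrite eqEfsubset AB BA. Qed.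

Let fin_subset_le_trans : transitive (fun A B : fin_subset T => fsubset A B).
Proof. by move=> B A C; exact: fsubset_trans. Qed.

HB.instance Definition _ := Choice.on (fin_subset T).
HB.instance Definition _ := Order.Le_isPOrder.Build (Order.Disp tt tt)
  (fin_subset T) (@fsubset_refl T) fin_subset_le_anti fin_subset_le_trans.

Lemma fin_subset_directed : directed (fin_subset T).
Proof.
split; first by exists (fset0 : fin_subset T).
by move=> A B; exists (A `|` B)%fset; split; [exact: fsubsetUl | exact: fsubsetUr].
Qed.

End FinSubset.

Lemma finitely_generated_embedding_finite (X : topologicalType) :
  finitely_generated embedding X -> finite_set [set: X].
Proof.
move=> Xfg.
pose U (A : fin_subset X) : set (indiscrete X) := [set` A].
have Umono (A B : fin_subset X) : A <= B -> U A `<=` U B by move=> /fsubsetP AB x /AB.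
have Ucover x : exists A, U A x by exists [fset x]%fset; rewrite /U /= inE.
have Ufinal O : (forall A, open (@set_val _ (U A) @^-1` O)) -> open O.
  move=> Oopen; change (indiscrete_open X O) => x y Ox.
  pose xy : fin_subset X := [fset x; y]%fset.
  have [xyx xyy] : U xy x /\ U xy y by rewrite /U /= !inE !eqxx ?orbT.
  have [B Bopen BO] := set_val_open_trace (Oopen xy).
  have [_ Bx] : (U xy `&` B) x by rewrite BO.
  by have [] : (U xy `&` O) y by rewrite -BO; split=> //; exact: Bopen Bx.
have [A XA] := finitely_generated_sub_union (fin_subset_directed X) Umono Ucover Ufinal
  Xfg (piece_incl_embedding _) (continuous_indiscrete (id : X -> indiscrete X)).
by apply: sub_finite_set (finite_fset A) => x _; apply: XA; exists x.
Qed.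

Lemma finitely_generated_open_embedding_compact (X : topologicalType) :
  finitely_generated open_embedding X -> compact [set: X].
Proof.
move=> Xfg; apply/compactP => K D F Fopen XF.
pose U (A : fin_subset K) : set X := \bigcup_(k in [set k | k \in A /\ D k]) F k.
have Uopen A : open (U A) by apply: bigcup_open => k [_ /Fopen].
have Umono (A B : fin_subset K) : A <= B -> U A `<=` U B.
  by move=> /fsubsetP AB x [k [kA Dk] Fkx]; exists k => //; split=> //; exact: AB.
have Ucover x : exists A, U A x.
  by have [k Dk Fkx] := XF x I; exists [fset k]%fset, k => //; split; rewrite ?inE.
have [A XA] := finitely_generated_sub_union (fin_subset_directed K) Umono Ucover
  (open_of_open_cover Uopen Ucover) Xfg (piece_incl_open_embedding _ Uopen)
  (f := id) (fun x => cvg_id).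
exists [fset k in (A : {fset K}) | `[< D k >]]%fset.
  by move=> k; rewrite !inE => /andP [_ /asboolP].
move=> x _; have [k [kA Dk] Fkx] := XA x (imageT id x).
by exists k => //=; rewrite !inE kA; exact/asboolP.
Qed.

Theorem theorem3p3 (X : topologicalType) :
  (finitely_generated embedding X <-> finite_set [set: X]) /\
  (finitely_generated open_embedding X <-> compact [set: X]).
Proof.
split; split.
- exact: finitely_generated_embedding_finite.
- exact: finite_finitely_generated.
- exact: finitely_generated_open_embedding_compact.
- exact: compact_finitely_generated.
Qed.
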